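(* Every almost reciprocal Puiseux monoid has unique atomic decomposition.
   Context: A Puiseux monoid is an additive submonoid of $(\mathbb{Q}_{\ge 0},+)$. For a positive rational $r = n/d$ in lowest terms, $\mathsf{d}(r) := d$. An almost reciprocal Puiseux monoid is a monoid of the form $\langle \frac{c_n}{d_n} \mid n \in \mathbb{N} \rangle$, where $(d_n)_{n\ge 1}$ is a strictly increasing sequence of positive integers whose terms are pairwise relatively prime, and $(c_n)_{n \ge 1}$ is a sequence of positive integers with $\gcd(c_n,d_n)=1$ for every $n$. An atom of $M$ is a nonzero element $a$ such that $a=x+y$ with $x,y\in M$ forces $x=0$ or $y=0$; $M$ is atomic if each element is a finite sum of atoms (almost reciprocal Puiseux monoids are atomic). Let $M$ be an atomic Puiseux monoid with set of atoms $\mathcal{A}(M) = \{a_n \mid n \in \mathbb{N}\}$. For $x \in M$, an atomic decomposition of $x$ is an expression $x = N + \sum_{i \in \mathbb{N}} c_i a_i$ (equality in $\mathbb{Q}$) with $N \in \mathbb{N}_0$ and $c_i \in \{0,1,\dots,\mathsf{d}(a_i)-1\}$ for every $i$, only finitely many $c_i$ nonzero. $M$ has unique atomic decomposition if every element of $M$ has exactly one atomic decomposition. *)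

From mathcomp Require Import all_boot all_order all_algebra.
Set Implicit Arguments. Unset Strict Implicit. Unset Printing Implicit Defensive.
Import Order.TTheory GRing.Theory Num.Theory.
Local Open Scope ring_scope.

Definition gen_monoid (g : nat -> rat) (x : rat) : Prop :=
  exists s : seq nat, x = \sum_(i <- s) g i.

Definition almost_reciprocal_data (c d : nat -> nat) : Prop :=
  [/\ forall n, (0 < d n)%N,
      forall m n, (m < n)%N -> (d m < d n)%N,
      forall m n, m <> n -> coprime (d m) (d n),
      forall n, (0 < c n)%N &
      forall n, coprime (c n) (d n)].

Definition ar_gen (c d : nat -> nat) (n : nat) : rat := (c n)%:R / (d n)%:R.

Definition is_atom (M : rat -> Prop) (a : rat) : Prop :=
  [/\ M a, a <> 0 &
      forall x y, M x -> M y -> a = x + y -> x = 0 \/ y = 0].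

Definition atomic_decomposition (M : rat -> Prop) (x : rat)
    (N : nat) (f : rat -> nat) : Prop :=
  exists s : seq rat,
    [/\ uniq s,
        forall a, a \in s -> is_atom M a,
        forall a, a \notin s -> f a = 0%N,
        forall a, is_atom M a -> ((f a)%:Z < denq a)%R &
        x = N%:R + \sum_(a <- s) (f a)%:R * a].

(* Unique atomic decomposition: every element has exactly one atomic
   decomposition (the coefficient functions agree on every atom, hence
   everywhere since they vanish off atoms). *)
Definition has_unique_atomic_decomposition (M : rat -> Prop) : Prop :=
  forall x, M x ->
    (exists N f, atomic_decomposition M x N f) /\
    (forall N1 f1 N2 f2, atomic_decomposition M x N1 f1 ->
       atomic_decomposition M x N2 f2 -> N1 = N2 /\ forall a, f1 a = f2 a).

From HB Require Import structures.
From mathcomp Require Import all_boot all_order all_algebra ring lra zify.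

(* The atoms of <c_n/d_n> are generators, every generator with d_n > 1 is an
   atom, and distinct atoms have coprime denominators.  Rationals whose
   denominator is coprime to m form a subring, so if an integer combination
   sum k_a a of distinct atoms is an integer, isolating one atom a shows that
   k_a a has denominator coprime to denq a, whence denq a divides k_a: the
   coefficients below denq a are therefore unique.  Existence is obtained by
   adding generators one at a time, trading d_n copies of c_n/d_n for the
   integer c_n. *)
Set Implicit Arguments. Unset Strict Implicit. Unset Printing Implicit Defensive.
Import Order.TTheory GRing.Theory Num.Theory.
Local Open Scope ring_scope.

Definition coprime_den (m : nat) : {pred rat} := fun y => coprime `|denq y| m.

Lemma coprime_denP m y :
  reflect (exists2 P : nat, coprime P m & P%:R * y \is a Num.int)
          (y \in coprime_den m).
Proof.
apply: (iffP idP) => [ym | [P Pm /intrP[z Pyz]]].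
  exists `|denq y|%N => //; apply/intrP; exists (numq y).
  by rewrite numqE mulrC pmulrn absz_denq.
have : (denq y %| P%:Z * numq y)%Z.
  apply/dvdzP; exists z; apply: (@intr_inj rat).
  by rewrite !rmorphM /= numqE mulrA -pmulrn Pyz.
rewrite Gauss_dvdzl; last by rewrite coprimezE coprime_sym coprime_num_den.
by rewrite dvdzE => /coprime_dvdl; apply.
Qed.

Fact coprime_den_subring m : subring_closed (coprime_den m).
Proof.
split=> [|x y|x y]; first by rewrite unfold_in /= coprime1n.
all: move=> /coprime_denP[P Pm Px] /coprime_denP[Q Qm Qy].
all: apply/coprime_denP; exists (P * Q)%N; first by rewrite coprimeMl Pm Qm.
  rewrite natrM mulrBr rpredB //; first by rewrite mulrAC rpredM ?rpred_nat.
  by rewrite -mulrA rpredM ?rpred_nat.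
by rewrite natrM mulrACA rpredM.
Qed.

HB.instance Definition _ m :=
  GRing.isSubringClosed.Build rat (coprime_den m) (coprime_den_subring m).

Lemma denq_dvd_of_coprime_den (k : int) (q : rat) :
  k%:~R * q \in coprime_den `|denq q| -> (denq q %| k)%Z.
Proof.
case/coprime_denP=> P Pq /intrP[z Pkqz].
have : (denq q %| P%:Z * k * numq q)%Z.
  apply/dvdzP; exists z; apply: (@intr_inj rat).
  by rewrite !rmorphM /= numqE !mulrA -[_ * q]mulrA -pmulrn Pkqz.
rewrite Gauss_dvdzl; last by rewrite coprimezE coprime_sym coprime_num_den.
by rewrite Gauss_dvdzr // coprimezE coprime_sym.
Qed.

Lemma eq_of_dvdz_subn (m : int) (i j : nat) :
  (i%:Z < m) -> (j%:Z < m) -> (m %| i%:Z - j%:Z)%Z -> i = j.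
Proof.
move=> im jm; rewrite -eqz_mod_dvd !modz_small ?ler0n ?im ?jm //.
by move/eqP=> [].
Qed.

Lemma big_uniq_support (R : nmodType) (I : eqType) (r r' : seq I) (F : I -> R) :
  uniq r -> uniq r' -> {subset r <= r'} -> {in r', forall i, i \notin r -> F i = 0} ->
  \sum_(i <- r) F i = \sum_(i <- r') F i.
Proof.
move=> ur ur' rr' F0.
rewrite [RHS](bigID (mem r)) /= [X in _ + X]big1_seq ?addr0.
  rewrite -[RHS]big_filter; apply: perm_big; apply: uniq_perm; rewrite ?filter_uniq //.
  by move=> i; rewrite mem_filter andb_idr // => /rr'.
by move=> i /andP[/F0].
Qed.

Section AtomicDecomposition.
Variable M : rat -> Prop.

Lemma atomic_decomposition0 : atomic_decomposition M 0 0 (fun=> 0%N).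
Proof. by exists [::]; split=> //; rewrite big_nil addr0. Qed.

Lemma atomic_decompositionDn x N f k :
  atomic_decomposition M x N f -> atomic_decomposition M (k%:R + x) (k + N) f.
Proof. by case=> s [us sA sZ sB ->]; exists s; split=> //; rewrite natrD addrA. Qed.

Lemma atomic_decomposition_update x N f a N' w :
  atomic_decomposition M x N f -> is_atom M a -> w%:Z < denq a ->
  N'%:R + w%:R * a = N%:R + (f a).+1%:R * a ->
  atomic_decomposition M (a + x) N' (fun b => if b == a then w else f b).
Proof.
case=> s [us sA sZ sB ->] Aa wa eN.
have rem_a_s b : (b \in rem a s) = (b != a) && (b \in s) by rewrite mem_rem_uniq.
exists (a :: rem a s); split.
- by rewrite /= rem_a_s eqxx rem_uniq.
- by move=> b; rewrite inE rem_a_s => /predU1P[-> // | /andP[_ /sA]].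
- move=> b; rewrite inE rem_a_s negb_or => /andP[ba].
  by rewrite (negPf ba) /=; apply: sZ.
- by move=> b /sB; case: eqP => [->|].
rewrite big_cons eqxx.
have -> : \sum_(b <- rem a s) (if b == a then w else f b)%:R * b =
          \sum_(b <- rem a s) (f b)%:R * b.
  by apply: eq_big_seq => b; rewrite rem_a_s => /andP[/negPf ->].
have -> : \sum_(b <- s) (f b)%:R * b = (f a)%:R * a + \sum_(b <- rem a s) (f b)%:R * b.
  have [a_s | aNs] := boolP (a \in s); first by rewrite (big_rem a a_s).
  by rewrite rem_id // sZ // mul0r add0r.
rewrite [RHS]addrA eN.
ring.
Qed.
End AtomicDecomposition.

Section UniqueDecomposition.
Variable M : rat -> Prop.
Hypothesis atom_denq_coprime : forall a b,
  is_atom M a -> is_atom M b -> a != b -> coprime `|denq a| `|denq b|.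

Lemma denq_dvd_int_combination (s : seq rat) (k : rat -> int) :
  uniq s -> (forall a, a \in s -> is_atom M a) ->
  \sum_(b <- s) (k b)%:~R * b \is a Num.int ->
  {in s, forall a, (denq a %| k a)%Z}.
Proof.
move=> us sA sum_int a a_s; apply: denq_dvd_of_coprime_den.
move: sum_int; rewrite (bigD1_seq a) //= => sum_int.
have rest : \sum_(b <- s | b != a) (k b)%:~R * b \in coprime_den `|denq a|.
  rewrite big_seq_cond rpred_sum // => b /andP[b_s ba]; rewrite rpredM ?rpred_int //.
  by rewrite unfold_in /=; apply: atom_denq_coprime => //; apply: sA.
by have := rpredB (rpred_int_num _ sum_int) rest; rewrite addrK.
Qed.

Lemma atomic_decomposition_unique x N1 f1 N2 f2 :
  atomic_decomposition M x N1 f1 -> atomic_decomposition M x N2 f2 ->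
  N1 = N2 /\ f1 =1 f2.
Proof.
case=> s1 [u1 A1 Z1 B1 E1] [s2 [u2 A2 Z2 B2 E2]].
pose s := undup (s1 ++ s2).
have mem_s a : (a \in s) = (a \in s1) || (a \in s2) by rewrite mem_undup mem_cat.
have sA a : a \in s -> is_atom M a by rewrite mem_s => /orP[/A1|/A2].
have sum_s (f : rat -> nat) r : uniq r -> {subset r <= s} ->
    (forall a, a \notin r -> f a = 0%N) ->
    \sum_(a <- r) (f a)%:R * a = \sum_(a <- s) (f a)%:R * a.
  move=> ur rs fr; apply: big_uniq_support; rewrite ?undup_uniq // => a _ /fr ->.
  exact: mul0r.
have dN : N2%:R - N1%:R = \sum_(a <- s) ((f1 a)%:Z - (f2 a)%:Z)%:~R * a.
  rewrite (eq_bigr (fun a => (f1 a)%:R * a - (f2 a)%:R * a)) => [|a _]; last first.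
    by rewrite intrB mulrBl.
  rewrite sumrB -(sum_s f1 s1) //; last by move=> a; rewrite mem_s => ->.
  rewrite -(sum_s f2 s2) //; last by move=> a; rewrite mem_s => ->; rewrite orbT.
  by move: E2; rewrite E1 => e; lra.
have f12 : f1 =1 f2.
  move=> a; have [a_s | aNs] := boolP (a \in s); last first.
    by rewrite Z1 ?Z2 //; apply: contra aNs; rewrite mem_s => ->; rewrite ?orbT.
  apply: eq_of_dvdz_subn (B1 a (sA a a_s)) (B2 a (sA a a_s)) _.
  pose k b := (f1 b)%:Z - (f2 b)%:Z.
  apply: (denq_dvd_int_combination (k := k) (undup_uniq _) sA) => //.
  by rewrite -dN rpredB ?rpred_nat.
split=> //; apply/eqP; rewrite eq_sym -(eqr_nat rat) -subr_eq0 dN.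
by rewrite big1 // => a _; rewrite f12 subrr mul0r.
Qed.
End UniqueDecomposition.

Section GeneratedMonoid.
Variable g : nat -> rat.
Hypothesis g_ge0 : forall i, 0 <= g i.
Hypothesis g_atom : forall i, 1 < denq (g i) -> is_atom (gen_monoid g) (g i).

Lemma gen_monoid_atomic_decomposition x :
  gen_monoid g x -> exists N f, atomic_decomposition (gen_monoid g) x N f.
Proof.
case=> t ->; elim: t => [|i t [N [f IH]]].
  by exists 0%N, (fun=> 0%N); rewrite big_nil; apply: atomic_decomposition0.
rewrite big_cons; set a := g i.
have num_a : (`|numq a|%:R : rat) = (denq a)%:~R * a.
  by rewrite natr_absz ger0_norm ?numq_ge0 ?g_ge0 // mulrC -numqE.
have [a_gt1 | a_le1] := ltrP 1 (denq a); last first.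
  have den_a : denq a = 1 by have := denq_gt0 a; lia.
  exists (`|numq a| + N)%N, f; rewrite {1}[a](_ : _ = `|numq a|%:R); last first.
    by rewrite num_a den_a mul1r.
  exact: atomic_decompositionDn.
have a_atom := g_atom a_gt1.
have fa : (f a)%:Z < denq a by case: IH => s [_ _ _ B _]; apply: B.
have [fa1 | fa1] := ltrP (f a).+1%:Z (denq a).
  exists N, (fun b => if b == a then (f a).+1 else f b).
  exact: atomic_decomposition_update IH a_atom fa1 erefl.
exists (N + `|numq a|)%N, (fun b => if b == a then 0%N else f b).
apply: atomic_decomposition_update IH a_atom (denq_gt0 a) _.
have carry : (f a).+1%:Z = denq a by lia.
by rewrite natrD mul0r addr0 num_a -carry.
Qed.
End GeneratedMonoid.

Section AlmostReciprocal.
Variables c d : nat -> nat.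
Hypothesis d_gt0 : forall n, (0 < d n)%N.
Hypothesis d_coprime : forall m n, m <> n -> coprime (d m) (d n).
Hypothesis c_gt0 : forall n, (0 < c n)%N.
Hypothesis cd_coprime : forall n, coprime (c n) (d n).
Local Notation g := (ar_gen c d).
Local Notation M := (gen_monoid g).

Lemma ar_gen_gt0 n : 0 < g n.
Proof. by rewrite divr_gt0 ?ltr0n. Qed.

Lemma denq_ar_gen n : denq (g n) = d n.
Proof.
rewrite /ar_gen -[(c n)%:R]/((c n)%:Z%:~R) -[(d n)%:R]/((d n)%:Z%:~R).
by rewrite coprimeq_den //= eqz_nat gtn_eqF.
Qed.

Lemma ar_gen_coprime_den m n : m <> n -> g m \in coprime_den (d n).
Proof. by rewrite unfold_in /= denq_ar_gen; apply: d_coprime. Qed.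

Lemma sum_ar_gen_ge0 (t : seq nat) : 0 <= \sum_(i <- t) g i.
Proof. by rewrite sumr_ge0 // => i _; apply/ltW/ar_gen_gt0. Qed.

Lemma ar_gen_le_sum (t : seq nat) n : n \in t -> g n <= \sum_(i <- t) g i.
Proof. by move=> n_t; rewrite (big_rem n n_t) lerDl sum_ar_gen_ge0. Qed.

Lemma atom_ar_gen a : is_atom M a -> exists n, a = g n.
Proof.
case=> [[[|n t] ->]]; first by rewrite big_nil.
rewrite big_cons => _ a_atom; exists n.
have [||gn0|->] := a_atom (g n) (\sum_(i <- t) g i) _ _ erefl.
- by exists [:: n]; rewrite big_seq1.
- by exists t.
- by have := ar_gen_gt0 n; rewrite gn0 ltxx.
- by rewrite addr0.
Qed.

Lemma ar_gen_atom n : (1 < d n)%N -> is_atom M (g n).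
Proof.
move=> dn_gt1; split; first by exists [:: n]; rewrite big_seq1.
  by apply/eqP; rewrite gt_eqF ?ar_gen_gt0.
move=> _ _ [t1 ->] [t2 ->] gn_sum.
have [n_t1 | nNt1] := boolP (n \in t1).
  have := ar_gen_le_sum n_t1; have := sum_ar_gen_ge0 t2; right; lra.
have [n_t2 | nNt2] := boolP (n \in t2).
  have := ar_gen_le_sum n_t2; have := sum_ar_gen_ge0 t1; left; lra.
have : 1%:~R * g n \in coprime_den `|denq (g n)|.
  rewrite mul1r denq_ar_gen gn_sum -big_cat big_seq rpred_sum // => i.
  rewrite mem_cat => i_t; apply: ar_gen_coprime_den => in_.
  by rewrite in_ (negPf nNt1) (negPf nNt2) in i_t.
move=> /denq_dvd_of_coprime_den; rewrite denq_ar_gen dvdz1 /= => /eqP dn1.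
by rewrite dn1 in dn_gt1.
Qed.

Lemma ar_atom_denq_coprime a b :
  is_atom M a -> is_atom M b -> a != b -> coprime `|denq a| `|denq b|.
Proof.
move=> /atom_ar_gen[m ->] /atom_ar_gen[n ->] gmn; rewrite !denq_ar_gen.
by apply: d_coprime => mn; rewrite mn eqxx in gmn.
Qed.
End AlmostReciprocal.

Unset Implicit Arguments.
Theorem proposition4p3 (c d : nat -> nat) :
  almost_reciprocal_data c d ->
  has_unique_atomic_decomposition (gen_monoid (ar_gen c d)).
Proof.
case=> d_gt0 _ d_coprime c_gt0 cd_coprime x Mx; split.
  apply: gen_monoid_atomic_decomposition Mx => i; first exact/ltW/ar_gen_gt0.
  by rewrite denq_ar_gen // ltz_nat; apply: ar_gen_atom.
by move=> N1 f1 N2 f2; apply: atomic_decomposition_unique; apply: ar_atom_denq_coprime.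
Qed.
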